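(* Let $\mathbb{L}$ be a complete lattice, let $E^1,E^2$ be bounded spectral families in $\mathbb{L}$, and define $E_{\lambda,\mu}:=E^1_\lambda\wedge E^2_\mu$ for $\lambda,\mu\in\mathbb{R}$. Then $E=(E_{\lambda,\mu})_{\lambda,\mu\in\mathbb{R}}$ is a bounded complex spectral family, and the function associated to $E$ is $f_E=f_{E^1}+i\,f_{E^2}$.
   Context: A spectral family in $\mathbb{L}$ (with $0$, $1$) is a map $F:\mathbb{R}\to\mathbb{L}$ with $F_\lambda\le F_\mu$ for $\lambda\le\mu$, $F_\lambda=\bigwedge_{\mu>\lambda}F_\mu$, $\bigwedge_\lambda F_\lambda=0$, $\bigvee_\lambda F_\lambda=1$; it is bounded if there are $a\le b$ with $F_\lambda=0$ for $\lambda<a$ and $F_\lambda=1$ for $\lambda\ge b$; its associated function on the Stone spectrum is $f_F(\mathfrak{B})=\inf\{\lambda\mid F_\lambda\in\mathfrak{B}\}$. The Stone spectrum $\mathcal{Q}(\mathbb{L})$ is the set of quasipoints (maximal dual ideals: maximal nonempty upward closed subsets not containing $0$, closed under finite meets) with the topology generated by $\{\mathfrak{B}\mid a\in\mathfrak{B}\}$, $a\in\mathbb{L}$. A complex (2-parameter) spectral family is a map $E:\mathbb{R}^2\to\mathbb{L}$ with (i) $E_{\lambda_1,\lambda_2}\wedge E_{\mu_1,\mu_2}=E_{\min\{\lambda_1,\mu_1\},\min\{\lambda_2,\mu_2\}}$; (ii) $\bigwedge_{\lambda_1<\mu_1,\lambda_2<\mu_2}E_{\mu_1,\mu_2}=E_{\lambda_1,\lambda_2}$;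 (iii) $\bigwedge_{\lambda}E_{\lambda,\lambda_2}=0=\bigwedge_\lambda E_{\lambda_1,\lambda}$ for all $\lambda_1,\lambda_2$, and $\bigvee_{\lambda_1,\lambda_2}E_{\lambda_1,\lambda_2}=1$. It is bounded if there are $m,M'$ with $E_{\lambda_1,\lambda_2}=0$ whenever some $\lambda_k\le m$ and $E_{\lambda_1,\lambda_2}=1$ whenever $\lambda_1,\lambda_2\ge M'$. For such $E$, $f_E:\mathcal{Q}(\mathbb{L})\to\mathbb{C}$ is $f_E=f_{E,1}+if_{E,2}$ with $f_{E,1}(\mathfrak{B})=\inf\{\lambda\mid\exists\mu: E_{\lambda,\mu}\in\mathfrak{B}\}$ and $f_{E,2}(\mathfrak{B})=\inf\{\mu\mid\exists\lambda: E_{\lambda,\mu}\in\mathfrak{B}\}$. *)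

From HB Require Import structures.
From mathcomp Require Import all_boot all_order all_algebra.
From mathcomp Require Import boolp classical_sets reals.
From mathcomp Require Import complex.
Set Implicit Arguments. Unset Strict Implicit. Unset Printing Implicit Defensive.
Import Order.TTheory GRing.Theory Num.Theory.
Local Open Scope ring_scope.
Local Open Scope classical_set_scope.

Record complete_lattice := CompleteLattice {
  carrier :> Type;
  cl_le : carrier -> carrier -> Prop;
  cl_le_refl : forall a, cl_le a a;
  cl_le_trans : forall a b c, cl_le a b -> cl_le b c -> cl_le a c;
  cl_le_anti : forall a b, cl_le a b -> cl_le b a -> a = b;
  Inf : set carrier -> carrier;
  Sup : set carrier -> carrier;
  Inf_lb : forall S a, S a -> cl_le (Inf S) a;
  Inf_glb : forall S b, (forall a, S a -> cl_le b a) -> cl_le b (Inf S);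
  Sup_ub : forall S a, S a -> cl_le a (Sup S);
  Sup_lub : forall S b, (forall a, S a -> cl_le a b) -> cl_le (Sup S) b
}.

Section Lat.
Variable L : complete_lattice.

Definition cl_bot : L := Inf (@setT L).
Definition cl_top : L := Inf (@set0 L).
Definition cl_meet (a b : L) : L := Inf [set a; b].

Definition dual_ideal (B : set L) : Prop :=
  (exists a, B a) /\
  (forall a b, B a -> cl_le a b -> B b) /\
  (forall a b, B a -> B b -> B (cl_meet a b)) /\
  ~ B cl_bot.

Definition quasipoint (B : set L) : Prop :=
  dual_ideal B /\ forall C, dual_ideal C -> B `<=` C -> C = B.

Variable R : realType.

Definition spectral_family (F : R -> L) : Prop :=
  (forall l m, l <= m -> cl_le (F l) (F m)) /\
  (forall l, F l = Inf [set F m | m in [set m | l < m]]) /\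
  Inf (range F) = cl_bot /\
  Sup (range F) = cl_top.

Definition bounded_spectral_family (F : R -> L) : Prop :=
  spectral_family F /\
  exists a b, a <= b /\
    (forall l, l < a -> F l = cl_bot) /\ (forall l, b <= l -> F l = cl_top).

Definition assoc_fun (F : R -> L) (B : set L) : R := inf [set l | B (F l)].

Definition complex_spectral_family (E : R -> R -> L) : Prop :=
  (forall l1 l2 m1 m2,
      cl_meet (E l1 l2) (E m1 m2) = E (Num.min l1 m1) (Num.min l2 m2)) /\
  (forall l1 l2,
      Inf [set E m.1 m.2 | m in [set m : R * R | l1 < m.1 /\ l2 < m.2]]
      = E l1 l2) /\
  (forall l1 l2, Inf (range (fun l => E l l2)) = cl_bot /\
                 Inf (range (fun l => E l1 l)) = cl_bot) /\
  Sup [set E m.1 m.2 | m in [set: R * R]] = cl_top.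

Definition bounded_complex_spectral_family (E : R -> R -> L) : Prop :=
  complex_spectral_family E /\
  exists m M', (forall l1 l2, (l1 <= m \/ l2 <= m) -> E l1 l2 = cl_bot) /\
               (forall l1 l2, M' <= l1 -> M' <= l2 -> E l1 l2 = cl_top).

Definition assoc_fun1 (E : R -> R -> L) (B : set L) : R :=
  inf [set l | exists mu, B (E l mu)].
Definition assoc_fun2 (E : R -> R -> L) (B : set L) : R :=
  inf [set mu | exists l, B (E l mu)].

Definition assoc_cfun (E : R -> R -> L) (B : set L) : R[i] :=
  ((assoc_fun1 E B)%:C)%C + 'i%C * ((assoc_fun2 E B)%:C)%C.

End Lat.

(* Since a spectral family is monotone, meeting two values of it gives its value at the
   smaller parameter; interchanging the meets in (E1 l1 /\ E2 l2) /\ (E1 m1 /\ E2 m2)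
   then yields the meet law of E. Right continuity, the bottom limits and the bounds pass
   to E componentwise. For the associated functions, a quasipoint is upward closed and
   E2 reaches 1, so E1 l /\ E2 mu lies in B for some mu exactly when E1 l does; hence
   f_{E,1} = f_{E1}, and symmetrically f_{E,2} = f_{E2}. *)
From HB Require Import structures.
From mathcomp Require Import all_boot all_order all_algebra.
From mathcomp Require Import boolp classical_sets reals.
From mathcomp Require Import complex.
From mathcomp Require Import lra.
Import Order.TTheory GRing.Theory Num.Theory.
Local Open Scope ring_scope.
Local Open Scope classical_set_scope.

Section CompleteLatticeTheory.
Context {L : complete_lattice}.
Implicit Types a b c d : L.

Lemma cl_leIl a b : cl_le (cl_meet a b) a.
Proof. by apply: Inf_lb; left. Qed.

Lemma cl_leIr a b : cl_le (cl_meet a b) b.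
Proof. by apply: Inf_lb; right. Qed.

Lemma cl_lexI a b c : cl_le c a -> cl_le c b -> cl_le c (cl_meet a b).
Proof. by move=> ca cb; apply: Inf_glb => x [->|->]. Qed.

Lemma cl_le0x a : cl_le (cl_bot L) a.
Proof. exact: Inf_lb. Qed.

Lemma cl_lex1 a : cl_le a (cl_top L).
Proof. by apply: Inf_glb. Qed.

Lemma cl_leI2 a b c d : cl_le a c -> cl_le b d -> cl_le (cl_meet a b) (cl_meet c d).
Proof.
move=> ac bd; apply: cl_lexI.
- exact: cl_le_trans (cl_leIl a b) ac.
- exact: cl_le_trans (cl_leIr a b) bd.
Qed.

Lemma cl_meet_l a b : cl_le a b -> cl_meet a b = a.
Proof.
by move=> ab; apply: cl_le_anti; [apply: cl_leIl | apply: cl_lexI; first exact: cl_le_refl].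
Qed.

Lemma cl_meet_r a b : cl_le b a -> cl_meet a b = b.
Proof.
by move=> ba; apply: cl_le_anti; [apply: cl_leIr | apply: cl_lexI; last exact: cl_le_refl].
Qed.

Lemma cl_meetx1 a : cl_meet a (cl_top L) = a.
Proof. exact/cl_meet_l/cl_lex1. Qed.

Lemma cl_meet1x a : cl_meet (cl_top L) a = a.
Proof. exact/cl_meet_r/cl_lex1. Qed.

Lemma cl_meet0x a : cl_meet (cl_bot L) a = cl_bot L.
Proof. exact/cl_meet_l/cl_le0x. Qed.

Lemma cl_meetx0 a : cl_meet a (cl_bot L) = cl_bot L.
Proof. exact/cl_meet_r/cl_le0x. Qed.

Lemma cl_meetACA a b c d :
  cl_meet (cl_meet a b) (cl_meet c d) = cl_meet (cl_meet a c) (cl_meet b d).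
Proof.
suff le_ACA a' b' c' d' :
    cl_le (cl_meet (cl_meet a' b') (cl_meet c' d')) (cl_meet (cl_meet a' c') (cl_meet b' d')).
  by apply: cl_le_anti; apply: le_ACA.
by apply: cl_lexI; apply: cl_leI2; [apply: cl_leIl | apply: cl_leIl | apply: cl_leIr | apply: cl_leIr].
Qed.

Lemma Inf_range_bot_mono {T : Type} {f g : T -> L} :
  Inf (range f) = cl_bot L -> (forall t, cl_le (g t) (f t)) -> Inf (range g) = cl_bot L.
Proof.
move=> f_bot gf; apply: cl_le_anti; last exact: cl_le0x.
rewrite -f_bot; apply: Inf_glb => _ [t _ <-].
by apply: cl_le_trans (gf t); apply: Inf_lb; exists t.
Qed.

Lemma Sup_top (S : set L) : S (cl_top L) -> Sup S = cl_top L.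
Proof. by move=> S1; apply: cl_le_anti; [apply: cl_lex1 | apply: Sup_ub]. Qed.

End CompleteLatticeTheory.

Section MeetFamily.
Context {L : complete_lattice} {R : realType}.
Variables F G : R -> L.

Definition meet_family (l mu : R) : L := cl_meet (F l) (G mu).

Lemma cl_meet_monotone_min (H : R -> L) :
  (forall l m, l <= m -> cl_le (H l) (H m)) ->
  forall x y, cl_meet (H x) (H y) = H (Num.min x y).
Proof.
move=> H_mono x y; have [xy | yx] := leP x y.
- exact/cl_meet_l/H_mono.
- exact/cl_meet_r/H_mono/ltW.
Qed.

Hypothesis F_mono : forall l m, l <= m -> cl_le (F l) (F m).
Hypothesis G_mono : forall l m, l <= m -> cl_le (G l) (G m).

Lemma meet_family_meet l1 l2 m1 m2 :
  cl_meet (meet_family l1 l2) (meet_family m1 m2)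
  = meet_family (Num.min l1 m1) (Num.min l2 m2).
Proof.
by rewrite /meet_family cl_meetACA !cl_meet_monotone_min.
Qed.

Hypothesis F_rc : forall l, F l = Inf [set F m | m in [set m | l < m]].
Hypothesis G_rc : forall l, G l = Inf [set G m | m in [set m | l < m]].

Lemma meet_family_right_continuous l1 l2 :
  Inf [set meet_family m.1 m.2 | m in [set m : R * R | l1 < m.1 /\ l2 < m.2]]
  = meet_family l1 l2.
Proof.
apply: cl_le_anti; last first.
  by apply: Inf_glb => _ [[m1 m2] /= [lm1 lm2] <-]; apply: cl_leI2; [apply/F_mono/ltW | apply/G_mono/ltW].
apply: cl_lexI.
- rewrite F_rc; apply: Inf_glb => _ [m lm <-].
  apply: cl_le_trans (cl_leIl (F m) (G (l2 + 1))).
  by apply: Inf_lb; exists (m, l2 + 1) => //=; split => //; lra.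
- rewrite G_rc; apply: Inf_glb => _ [m lm <-].
  apply: cl_le_trans (cl_leIr (F (l1 + 1)) (G m)).
  by apply: Inf_lb; exists (l1 + 1, m) => //=; split => //; lra.
Qed.

End MeetFamily.

Lemma meet_family_bounded_complex {L : complete_lattice} {R : realType} (F G : R -> L) :
  bounded_spectral_family F -> bounded_spectral_family G ->
  bounded_complex_spectral_family (meet_family F G).
Proof.
move=> [[F_mono [F_rc [F_bot _]]] [aF [bF [_ [F_low F_up]]]]].
move=> [[G_mono [G_rc [G_bot _]]] [aG [bG [_ [G_low G_up]]]]].
split; first split.
- exact: meet_family_meet.
- split; first exact: meet_family_right_continuous.
  split.
    move=> l1 l2; split.
    + by apply: (Inf_range_bot_mono F_bot) => l; apply: cl_leIl.
    + by apply: (Inf_range_bot_mono G_bot) => l; apply: cl_leIr.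
  apply: Sup_top; exists (bF, bG) => //.
  by rewrite /meet_family F_up // G_up // cl_meetx1.
- exists (Num.min aF aG - 1), (Num.max bF bG); split.
  + have minF : Num.min aF aG <= aF by rewrite ge_min lexx.
    have minG : Num.min aF aG <= aG by rewrite ge_min lexx orbT.
    move=> l1 l2 [l1m | l2m]; rewrite /meet_family.
    * by rewrite F_low ?cl_meet0x //; lra.
    * by rewrite G_low ?cl_meetx0 //; lra.
  + move=> l1 l2 Ml1 Ml2; rewrite /meet_family F_up ?G_up ?cl_meetx1 //.
    * by apply: le_trans Ml2; rewrite le_max lexx orbT.
    * by apply: le_trans Ml1; rewrite le_max lexx.
Qed.

Section AssociatedFunctions.
Context {L : complete_lattice} {R : realType} {B : set L} {F G : R -> L}.
Hypothesis B_dual : dual_ideal B.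

Lemma assoc_fun1_meet_family {bG : R} :
  G bG = cl_top L -> assoc_fun1 (meet_family F G) B = assoc_fun F B.
Proof.
move: B_dual => [_ [B_up _]] G_top.
rewrite /assoc_fun1 /assoc_fun; congr inf; apply/seteqP; split => l /=.
- by move=> [mu Bl]; apply: B_up Bl _; apply: cl_leIl.
- by move=> BFl; exists bG; rewrite /meet_family G_top cl_meetx1.
Qed.

Lemma assoc_fun2_meet_family {bF : R} :
  F bF = cl_top L -> assoc_fun2 (meet_family F G) B = assoc_fun G B.
Proof.
move: B_dual => [_ [B_up _]] F_top.
rewrite /assoc_fun2 /assoc_fun; congr inf; apply/seteqP; split => mu /=.
- by move=> [l Bmu]; apply: B_up Bmu _; apply: cl_leIr.
- by move=> BGmu; exists bF; rewrite /meet_family F_top cl_meet1x.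
Qed.

End AssociatedFunctions.

Lemma bounded_spectral_family_top {L : complete_lattice} {R : realType} {F : R -> L} :
  bounded_spectral_family F -> exists b, F b = cl_top L.
Proof. by move=> [_ [_ [b [_ [_ F_up]]]]]; exists b; apply: F_up. Qed.

Theorem proposition2p17 (L : complete_lattice) (R : realType)
  (E1 E2 : R -> L) :
  bounded_spectral_family E1 -> bounded_spectral_family E2 ->
  let E := fun l mu => cl_meet (E1 l) (E2 mu) in
  bounded_complex_spectral_family E /\
  (forall B : set L, quasipoint B ->
     assoc_cfun E B = ((assoc_fun E1 B)%:C)%C + 'i%C * ((assoc_fun E2 B)%:C)%C).
Proof.
move=> hE1 hE2 E; split; first exact: meet_family_bounded_complex.
move=> B [B_dual _].
have [b1 E1_top] := bounded_spectral_family_top hE1.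
have [b2 E2_top] := bounded_spectral_family_top hE2.
rewrite /assoc_cfun; congr (_%:C + 'i * _%:C)%C.
- exact: (assoc_fun1_meet_family (F := E1) B_dual E2_top).
- exact: (assoc_fun2_meet_family (G := E2) B_dual E1_top).
Qed.
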